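(* Let $n$ be a positive integer and let $P_n$ denote the path on $n$ vertices. Then $P_n$ is super edge-graceful if and only if $n \neq 2$ and $n \neq 4$.
   Context: All graphs are simple, finite and undirected. Let $G=(V,E)$ be a graph with $p=|V|$ vertices and $q=|E|$ edges. An edge labeling $f$ is a bijection $f:E\to\{0,\pm1,\pm2,\ldots,\pm\frac{q-1}{2}\}$ if $q$ is odd, and $f:E\to\{\pm1,\pm2,\ldots,\pm\frac{q}{2}\}$ if $q$ is even. For each vertex $x\in V$, the induced vertex label is $f^*(x)=\sum_{xy\in E}f(xy)$, the sum over all edges incident with $x$. The labeling $f$ is super edge-graceful if $f^*$ is a bijection from $V$ onto $\{0,\pm1,\pm2,\ldots,\pm\frac{p-1}{2}\}$ when $p$ is odd, and onto $\{\pm1,\pm2,\ldots,\pm\frac{p}{2}\}$ when $p$ is even. A graph is super edge-graceful if it admits a super edge-graceful labeling. *)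

From mathcomp Require Import all_boot all_order all_algebra.
Set Implicit Arguments. Unset Strict Implicit. Unset Printing Implicit Defensive.
Import Order.TTheory GRing.Theory Num.Theory.

(* A simple graph: vertex type T (finite), adjacency relation adj
   (assumed symmetric and irreflexive where relevant).
   Edges are 2-element vertex sets {x,y} with adj x y. *)
Definition edges (T : finType) (adj : rel T) : {set {set T}} :=
  [set e : {set T} | [exists x, exists y, adj x y && (e == [set x; y])]].

Definition labset (m : nat) (z : int) : bool :=
  if odd m then (`|z| <= m./2)%N else (z != 0) && (`|z| <= m./2)%N.

Definition vlabel (T : finType) (adj : rel T) (f : {set T} -> int) (x : T) : int :=
  (\sum_(e in edges adj | x \in e) f e)%R.

Definition bij_onto (A : Type) (D : pred A) (f : A -> int) (S : int -> bool) : Prop :=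
  {in D &, injective f} /\ {in D, forall a, S (f a)} /\
  (forall z, S z -> exists2 a, D a & f a = z).

Definition super_edge_graceful (T : finType) (adj : rel T) : Prop :=
  exists f : {set T} -> int,
    bij_onto (mem (edges adj)) f (labset #|edges adj|) /\
    bij_onto (mem [pred x : T | true]) (vlabel adj f) (labset #|T|).

Definition path_adj (n : nat) : rel 'I_n :=
  fun i j => (i.+1 == j :> nat) || (j.+1 == i :> nat).
Arguments path_adj n : clear implicits.

From mathcomp Require Import all_boot all_order all_algebra zify.
Set Implicit Arguments. Unset Strict Implicit. Unset Printing Implicit Defensive.
Import Order.TTheory GRing.Theory Num.Theory.

(* Number the vertices of P_n as 0, ..., n-1 and its edges as e_i = {i, i+1}
   for i < n-1.  A labelling of the edges is then a sequence g_0, ..., g_(n-2)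
   and vertex i receives g_(i-1) + g_i, so P_n is super edge-graceful iff
   some sequence realises both label sets.  For n = 2k+1 the sequence
   -k, 1, 1-k, 2, ..., -1, k has consecutive sums -k, ..., k; for
   n = 4m+2 (m >= 1) and n = 4m (m >= 2) similar interlacings, perturbed
   near the middle, do the job.  For n = 2 and n = 4 the few constraints on
   g_0, g_1, g_2 are contradictory. *)

Lemma sum_ord_eq (R : nmodType) N a (F : nat -> R) :
  (\sum_(i < N | i == a :> nat) F i = if (a < N)%N then F a else 0)%R.
Proof.
case: ltnP => ha; first by rewrite (big_pred1 (Ordinal ha)) // => i; rewrite /= -val_eqE.
by rewrite big_pred0 // => i; apply/eqP => ia; move: (ltn_ord i); rewrite ia; lia.
Qed.

Section PathEdges.
Variable n : nat.

Definition path_edge (i : nat) : {set 'I_n} :=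
  [set x : 'I_n | (val x == i) || (val x == i.+1)].

Lemma path_edge_inj i j :
  (i < n.-1)%N -> (j < n.-1)%N -> path_edge i = path_edge j -> i = j.
Proof.
move=> hi hj eij.
have hi' : (i < n)%N by lia.
have hj' : (j < n)%N by lia.
have : Ordinal hi' \in path_edge j by rewrite -eij inE eqxx.
have : Ordinal hj' \in path_edge i by rewrite eij inE eqxx.
rewrite !inE /=; lia.
Qed.

Lemma edges_path : edges (path_adj n) = [set path_edge i | i : 'I_n.-1].
Proof.
apply/setP => e; rewrite inE; apply/existsP/imsetP.
- case=> x /existsP [y /andP [+ /eqP ->]]; rewrite /path_adj => /orP [] /eqP xy.
  + have hx : (x < n.-1)%N by move: (ltn_ord y); lia.
    by exists (Ordinal hx) => //; apply/setP => z; rewrite !inE -!val_eqE /= -xy; lia.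
  + have hy : (y < n.-1)%N by move: (ltn_ord x); lia.
    by exists (Ordinal hy) => //; apply/setP => z; rewrite !inE -!val_eqE /= -xy; lia.
- case=> i _ ->.
  have hi : (i < n)%N by move: (ltn_ord i); lia.
  have hi1 : (i.+1 < n)%N by move: (ltn_ord i); lia.
  exists (Ordinal hi); apply/existsP; exists (Ordinal hi1).
  by rewrite /path_adj /= eqxx; apply/eqP/setP => z; rewrite !inE -!val_eqE /=; lia.
Qed.

Lemma card_edges_path : #|edges (path_adj n)| = n.-1.
Proof.
rewrite edges_path card_imset ?card_ord // => i j /path_edge_inj eij.
by apply/val_inj/eij.
Qed.

(* Recovers i from e_i = {i, i+1}, since i + (i+1) = 2i+1. *)
Definition edge_index (e : {set 'I_n}) : nat := (\sum_(x in e) val x)./2.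

Lemma path_edgeK i : (i.+1 < n)%N -> edge_index (path_edge i) = i.
Proof.
move=> hi1; have hi : (i < n)%N by lia.
have -> : path_edge i = [set Ordinal hi; Ordinal hi1].
  by apply/setP => z; rewrite !inE -!val_eqE.
rewrite /edge_index big_setU1 ?big_set1 /=; first lia.
by rewrite inE -val_eqE /=; lia.
Qed.

Local Open Scope ring_scope.

Definition path_vsum (g : nat -> int) (x : nat) : int :=
  (if (x < n.-1)%N then g x else 0) + (if (0 < x)%N then g x.-1 else 0).

Lemma eq_path_vsum g1 g2 x :
  (forall i, (i < n.-1)%N -> g1 i = g2 i) -> (x < n)%N ->
  path_vsum g1 x = path_vsum g2 x.
Proof.
by move=> g12 hx; rewrite /path_vsum; congr (_ + _); case: ifP => // ?; apply: g12; lia.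
Qed.

Lemma vlabel_path (f : {set 'I_n} -> int) (x : 'I_n) :
  vlabel (path_adj n) f x = path_vsum (fun i => f (path_edge i)) x.
Proof.
rewrite /vlabel edges_path big_mkcondr big_imset /=; last first.
  by move=> i j _ _ /path_edge_inj eij; apply/val_inj/eij.
rewrite -big_mkcondr /= (bigID (fun i : 'I_n.-1 => i == x :> nat)) /=.
rewrite (eq_bigl (fun i : 'I_n.-1 => i == x :> nat)); last first.
  by move=> i; rewrite inE /= andb_idl // => /eqP ->; rewrite eqxx.
rewrite (sum_ord_eq _ _ (fun i => f (path_edge i))) /path_vsum; congr (_ + _).
have [x0 | x_gt0] := posnP x.
  by rewrite big_pred0 // => i; rewrite inE /= x0; lia.
rewrite (@eq_bigl _ _ _ _ _ _ (fun i : 'I_n.-1 => i == x.-1 :> nat)); last first.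
  by move=> i; rewrite inE /=; lia.
rewrite (sum_ord_eq _ _ (fun i => f (path_edge i))) ifT //.
by move: (ltn_ord x); lia.
Qed.

End PathEdges.

Local Open Scope ring_scope.

Definition int_range (h : nat) : seq int := [seq i%:Z - h%:Z | i <- iota 0 h.*2.+1].

Lemma mem_int_range h z : (z \in int_range h) = (`|z| <= h)%N.
Proof.
apply/mapP/idP => [[i] | zh]; first by rewrite mem_iota => /andP [_ hi] ->; lia.
by exists (absz (z + h%:Z)); rewrite ?mem_iota; lia.
Qed.

Lemma int_range_uniq h : uniq (int_range h).
Proof. by rewrite map_inj_in_uniq ?iota_uniq // => i j _ _ /eqP; rewrite subr_eq subrK => /eqP; lia. Qed.

Lemma labset_enum m : exists L : seq int, [/\ uniq L, size L = m & labset m =i L].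
Proof.
case odd_m: (odd m).
  exists (int_range m./2); split; first exact: int_range_uniq.
    by rewrite size_map size_iota; lia.
  by move=> z; rewrite mem_int_range -topredE /= /labset odd_m.
have range0 : 0 \in int_range m./2 by rewrite mem_int_range.
exists (rem 0 (int_range m./2)); split; first by rewrite rem_uniq ?int_range_uniq.
  by rewrite size_rem // size_map size_iota; lia.
by move=> z; rewrite mem_rem_uniq ?int_range_uniq // [RHS]inE mem_int_range -topredE /= /labset odd_m.
Qed.

Lemma labset_inj_onto m (h : nat -> int) :
  (forall i j, (i < m)%N -> (j < m)%N -> h i = h j -> i = j) ->
  (forall i, (i < m)%N -> labset m (h i)) ->
  forall z, labset m z -> exists2 i, (i < m)%N & h i = z.
Proof.
move=> h_inj h_lab z z_lab.
have [L [L_uniq L_size L_mem]] := labset_enum m.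
have himg_uniq : uniq [seq h i | i <- iota 0 m].
  by rewrite map_inj_in_uniq ?iota_uniq // => i j; rewrite !mem_iota /=; apply: h_inj.
have himg_sub : {subset [seq h i | i <- iota 0 m] <= L}.
  by move=> y /mapP [i]; rewrite mem_iota => /andP [_ hi] ->; rewrite -L_mem; apply: h_lab.
have [|_ himgE] := uniq_min_size himg_uniq himg_sub; first by rewrite size_map size_iota L_size.
have : z \in [seq h i | i <- iota 0 m] by rewrite himgE -L_mem.
by case/mapP => i; rewrite mem_iota => /andP [_ hi] ->; exists i.
Qed.

Definition graceful_path_seq (n : nat) (g : nat -> int) : Prop :=
  [/\ forall i j, (i < n.-1)%N -> (j < n.-1)%N -> g i = g j -> i = j,
      forall i, (i < n.-1)%N -> labset n.-1 (g i),
      forall i j, (i < n)%N -> (j < n)%N -> path_vsum n g i = path_vsum n g j -> i = j &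
      forall i, (i < n)%N -> labset n (path_vsum n g i)].

Lemma super_edge_graceful_pathP n :
  super_edge_graceful (path_adj n) <-> exists g, graceful_path_seq n g.
Proof.
have edge_in i : (i < n.-1)%N -> path_edge n i \in edges (path_adj n).
  by move=> hi; rewrite edges_path; apply/imsetP; exists (Ordinal hi).
split.
- case=> f [[f_inj [f_lab _]] [v_inj [v_lab _]]].
  rewrite card_edges_path in f_lab; rewrite card_ord in v_lab.
  have vsumE i (hi : (i < n)%N) :
      path_vsum n (fun i => f (path_edge n i)) i = vlabel (path_adj n) f (Ordinal hi).
    by rewrite vlabel_path.
  exists (fun i => f (path_edge n i)); split.
  + move=> i j hi hj /(f_inj _ _ (edge_in _ hi) (edge_in _ hj)); exact: path_edge_inj.
  + by move=> i /edge_in; apply: f_lab.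
  + by move=> i j hi hj; rewrite (vsumE _ hi) (vsumE _ hj) => /v_inj /(congr1 val); apply.
  + by move=> i hi; rewrite (vsumE _ hi); apply: v_lab.
- case=> g [g_inj g_lab v_inj v_lab].
  have gE i : (i < n.-1)%N -> g (edge_index (path_edge n i)) = g i.
    by move=> hi; rewrite path_edgeK //; lia.
  have vlabelE (x : 'I_n) : vlabel (path_adj n) (g \o @edge_index n) x = path_vsum n g x.
    by rewrite vlabel_path; apply: eq_path_vsum => // i /gE.
  exists (g \o @edge_index n); rewrite card_edges_path card_ord; split; split.
  + move=> e1 e2; rewrite edges_path => /imsetP [i _ ->] /imsetP [j _ ->] /=.
    by rewrite !gE // => /g_inj eij; rewrite eij.
  + split; first by move=> e; rewrite edges_path => /imsetP [i _ ->] /=; rewrite gE // g_lab.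
    move=> z /(labset_inj_onto g_inj g_lab) [i hi <-].
    by exists (path_edge n i); [exact: edge_in | rewrite /= gE].
  + by move=> x y _ _; rewrite !vlabelE => /v_inj eij; apply/val_inj/eij.
  + split; first by move=> x _; rewrite vlabelE v_lab.
    move=> z /(labset_inj_onto v_inj v_lab) [i hi <-].
    by exists (Ordinal hi); rewrite ?vlabelE.
Qed.

Ltac case_lia := rewrite ?/labset; repeat (case: ifP => /= ?); try lia.

Definition seq_odd (k i : nat) : int :=
  if odd i then (i./2).+1%:Z else (i./2)%:Z - k%:Z.

Lemma path_vsum_odd k i : (i < k.*2.+1)%N -> path_vsum k.*2.+1 (seq_odd k) i = i%:Z - k%:Z.
Proof. by move=> hi; rewrite /path_vsum /seq_odd /=; case_lia. Qed.

Lemma graceful_path_seq_odd k : graceful_path_seq k.*2.+1 (seq_odd k).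
Proof.
split.
- by move=> i j hi hj; rewrite /seq_odd; case_lia.
- by move=> i hi; rewrite /seq_odd; case_lia.
- by move=> i j hi hj; rewrite !path_vsum_odd //; lia.
- by move=> i hi; rewrite path_vsum_odd //; case_lia.
Qed.

Definition seq_4m2 (m i : nat) : int :=
  if (i <= m.*2)%N then (if odd i then (i./2)%:Z - (m.*2)%:Z else (i./2)%:Z - 1)
  else if i == m.*2.+1 then m%:Z
  else if odd i then (i./2)%:Z - (m.*2.+1)%:Z else (i./2)%:Z.

Definition vsum_4m2 (m i : nat) : int :=
  if i == 0%N then -1 else if (i <= m.*2)%N then i%:Z - (m.*2.+2)%:Z
  else if i == m.*2.+1 then (m.*2)%:Z - 1
  else if i == m.*2.+2 then (m.*2.+1)%:Z
  else if (i <= 4 * m)%N then i%:Z - (m.*2.+2)%:Z else (m.*2)%:Z.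

Lemma path_vsum_4m2 m i : (0 < m)%N -> (i < m.*2.+1.*2)%N ->
  path_vsum m.*2.+1.*2 (seq_4m2 m) i = vsum_4m2 m i.
Proof. by move=> hm hi; rewrite /path_vsum /seq_4m2 /vsum_4m2 /=; case_lia. Qed.

Lemma graceful_path_seq_4m2 m : (0 < m)%N -> graceful_path_seq m.*2.+1.*2 (seq_4m2 m).
Proof.
move=> hm; split.
- by move=> i j hi hj; rewrite /seq_4m2; case_lia.
- by move=> i hi; rewrite /seq_4m2; case_lia.
- by move=> i j hi hj; rewrite !path_vsum_4m2 // /vsum_4m2; case_lia.
- by move=> i hi; rewrite path_vsum_4m2 // /vsum_4m2; case_lia.
Qed.

Definition seq_4m (m i : nat) : int :=
  if (i <= m.*2 - 2)%N then (if odd i then (i./2)%:Z - (m.*2 - 1)%:Z else (i./2)%:Z - 1)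
  else if i == (m.*2 - 1)%N then m%:Z
  else if i == m.*2 then m%:Z - 1
  else if odd i then (i./2)%:Z + 1 else (i./2)%:Z - (m.*2.+1)%:Z.

Definition vsum_4m (m i : nat) : int :=
  if i == 0%N then -1 else if (i <= m.*2 - 2)%N then i%:Z - (m.*2.+1)%:Z
  else if i == (m.*2 - 1)%N then (m.*2)%:Z - 2
  else if i == m.*2 then (m.*2)%:Z - 1
  else if i == m.*2.+1 then (m.*2)%:Z
  else if (i <= 4 * m - 2)%N then i%:Z - (m.*2.+1)%:Z else -2.

Lemma path_vsum_4m m i : (1 < m)%N -> (i < 4 * m)%N ->
  path_vsum (4 * m) (seq_4m m) i = vsum_4m m i.
Proof. by move=> hm hi; rewrite /path_vsum /seq_4m /vsum_4m /=; case_lia. Qed.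

Lemma graceful_path_seq_4m m : (1 < m)%N -> graceful_path_seq (4 * m) (seq_4m m).
Proof.
move=> hm; split.
- by move=> i j hi hj; rewrite /seq_4m; case_lia.
- by move=> i hi; rewrite /seq_4m; case_lia.
- by move=> i j hi hj; rewrite !path_vsum_4m // /vsum_4m; case_lia.
- by move=> i hi; rewrite path_vsum_4m // /vsum_4m; case_lia.
Qed.

Lemma no_graceful_path_seq2 g : ~ graceful_path_seq 2 g.
Proof.
case=> _ g_lab v_inj _.
by have := g_lab 0%N isT; have := v_inj 0%N 1%N isT isT; rewrite /path_vsum /labset /=; lia.
Qed.

Lemma no_graceful_path_seq4 g : ~ graceful_path_seq 4 g.
Proof.
case=> g_inj g_lab v_inj v_lab.
have := g_lab 0%N isT; have := g_lab 1%N isT; have := g_lab 2%N isT.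
have := v_lab 0%N isT; have := v_lab 3%N isT; have := v_inj 0%N 1%N isT isT.
have := g_inj 0%N 1%N isT isT; have := g_inj 0%N 2%N isT isT; have := g_inj 1%N 2%N isT isT.
by rewrite /path_vsum /labset /=; lia.
Qed.

Theorem theorem1 (n : nat) : (0 < n)%N ->
  (super_edge_graceful (path_adj n) <-> (n != 2%N) /\ (n != 4%N)).
Proof.
move=> n_gt0; rewrite super_edge_graceful_pathP; split.
  case=> g g_graceful; split; apply/eqP => n_small; move: g_graceful; rewrite n_small.
    exact: no_graceful_path_seq2.
  exact: no_graceful_path_seq4.
case=> n_neq2 n_neq4.
have [n_odd | n_even] := boolP (odd n).
  have <- : n./2.*2.+1 = n by lia.
  by exists (seq_odd n./2); apply: graceful_path_seq_odd.
have [half_odd | half_even] := boolP (odd n./2).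
  have <- : n./2./2.*2.+1.*2 = n by lia.
  by exists (seq_4m2 n./2./2); apply: graceful_path_seq_4m2; lia.
have <- : 4 * n./2./2 = n by lia.
by exists (seq_4m n./2./2); apply: graceful_path_seq_4m; lia.
Qed.
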